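(* Let $a>0$, $a\neq1$, and let $\mathcal{G}$ be the real Lie algebra with basis $X_1,X_2,X_3$ and brackets $[X_1,X_2]=-aX_2-X_3$, $[X_2,X_3]=0$, $[X_3,X_1]=X_2+aX_3$ (Bianchi type $VI_a$). Every real Manin triple $(\mathcal{D},\mathcal{G}',\tilde{\mathcal{G}}')$ with $\mathcal{G}'\cong\mathcal{G}$ is isomorphic to exactly one Manin triple $(\mathcal{D},\mathcal{G},\tilde{\mathcal{G}})$ in which $\tilde{\mathcal{G}}$, in the basis $\tilde X^1,\tilde X^2,\tilde X^3$ dual to $X_1,X_2,X_3$, has one of the following bracket structures: (a) (Bianchi $I$) all brackets zero; (b) (Bianchi $II$) $[\tilde X^1,\tilde X^2]=0$, $[\tilde X^2,\tilde X^3]=\tilde X^1$, $[\tilde X^3,\tilde X^1]=0$; (c) (Bianchi $VI_{1/a}$) (i) $[\tilde X^1,\tilde X^2]=-b(\tfrac1a\tilde X^2+\tilde X^3)$, $[\tilde X^2,\tilde X^3]=0$, $[\tilde X^3,\tilde X^1]=b(\tilde X^2+\tfrac1a\tilde X^3)$, $b\in\mathbb{R}\setminus\{0\}$; (ii) $[\tilde X^1,\tilde X^2]=\tilde X^1$, $[\tilde X^2,\tilde X^3]=\tfrac{a+1}{a-1}(\tilde X^2+\tilde X^3)$, $[\tilde X^3,\tilde X^1]=\tilde X^1$; (iii) $[\tilde X^1,\tilde X^2]=\tilde X^1$, $[\tilde X^2,\tilde X^3]=\tfrac{a-1}{a+1}(-\tilde X^2+\tilde X^3)$, $[\tilde X^3,\tilde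 X^1]=-\tilde X^1$.
   Context: A real Manin triple $(\mathcal{D},\mathcal{G},\tilde{\mathcal{G}})$ consists of a real Lie algebra $\mathcal{D}$ with a symmetric, ad-invariant, nondegenerate bilinear form $\langle\cdot,\cdot\rangle$, and two maximally isotropic Lie subalgebras $\mathcal{G},\tilde{\mathcal{G}}$ with $\mathcal{D}=\mathcal{G}\oplus\tilde{\mathcal{G}}$ as vector spaces; here $\dim\mathcal{D}=6$, $\dim\mathcal{G}=\dim\tilde{\mathcal{G}}=3$. Bases $X_i$ of $\mathcal{G}$ and $\tilde X^i$ of $\tilde{\mathcal{G}}$ are dual if $\langle X_i,X_j\rangle=0$, $\langle X_i,\tilde X^j\rangle=\delta_i^j$, $\langle\tilde X^i,\tilde X^j\rangle=0$. If $[X_i,X_j]=f_{ij}{}^kX_k$ and $[\tilde X^i,\tilde X^j]=\tilde f^{ij}{}_k\tilde X^k$, ad-invariance forces $[X_i,\tilde X^j]=f_{ki}{}^j\tilde X^k+\tilde f^{jk}{}_iX_k$, so the triple is determined by the brackets of $\mathcal{G}$ and $\tilde{\mathcal{G}}$ in dual bases. Two Manin triples are isomorphic if there is a Lie algebra isomorphism of the doubles preserving the bilinear forms and mapping first subalgebra to first subalgebra and second to second; equivalently, they are related by a change of basis $X_i'=X_kA^k{}_i$, $\tilde X'^j=(A^{-1})^j{}_k\tilde X^k$. Different values of the parameter $b$ give non-isomorphic triples. *)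

From mathcomp Require Import all_boot all_order all_algebra.
From mathcomp Require Import reals.
Set Implicit Arguments. Unset Strict Implicit. Unset Printing Implicit Defensive.
Import Order.TTheory GRing.Theory Num.Theory.
Local Open Scope ring_scope.

(* Structure constants of a 3-dimensional algebra with basis indexed by 'I_3
   (index 0,1,2 stand for X_1,X_2,X_3):  [X_i, X_j] = \sum_k f i j k X_k. *)
Definition sc (R : ringType) := 'I_3 -> 'I_3 -> 'I_3 -> R.

Definition sc_eq (R : ringType) (f g : sc R) := forall i j k, f i j k = g i j k.

(* Elements of the double D = G (+) G~ in coordinates: (u, xi) stands for
   \sum_i u_i X_i + \sum_i xi_i X~^i. *)
Definition dbl (R : ringType) := ('rV[R]_3 * 'rV[R]_3)%type.

Definition dadd (R : ringType) (x y : dbl R) : dbl R := (x.1 + y.1, x.2 + y.2).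

(* The bracket of the double determined by f (brackets of G in the basis X_i)
   and ft (brackets of G~ in the dual basis X~^i), using
   [X_i,X_j] = f_ij^k X_k, [X~^i,X~^j] = ft^ij_k X~^k,
   [X_i,X~^j] = f_ki^j X~^k + ft^jk_i X_k,  [X~^j,X_i] = - [X_i,X~^j]. *)
Definition dbr (R : comRingType) (f ft : sc R) (x y : dbl R) : dbl R :=
  let u := x.1 in let xi := x.2 in let v := y.1 in let eta := y.2 in
  (\row_k (\sum_i \sum_j u 0 i * v 0 j * f i j k
           + \sum_i \sum_j u 0 i * eta 0 j * ft j k i
           - \sum_i \sum_j xi 0 j * v 0 i * ft j k i),
   \row_k (\sum_i \sum_j xi 0 i * eta 0 j * ft i j k
           + \sum_i \sum_j u 0 i * eta 0 j * f k i j
           - \sum_i \sum_j xi 0 j * v 0 i * f k i j)).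

(* (D, G, G~) with the above bracket is a Manin triple: the bracket is a Lie
   bracket (alternating + Jacobi).  The canonical pairing is then automatically
   symmetric, nondegenerate, ad-invariant, and G, G~ are maximally isotropic
   subalgebras (every real Manin triple of dim 6 arises this way after choosing
   dual bases). *)
Definition is_manin (R : comRingType) (f ft : sc R) : Prop :=
  (forall x : dbl R, dbr f ft x x = (0, 0)) /\
  (forall x y z : dbl R,
      dadd (dadd (dbr f ft x (dbr f ft y z)) (dbr f ft y (dbr f ft z x)))
           (dbr f ft z (dbr f ft x y)) = (0, 0)).

(* Change of basis X'_i = \sum_k X_k M_ki : new structure constants
   f'_ij^k = \sum M_pi M_qj f_pq^r (M^-1)_kr. *)
Definition chg (R : comUnitRingType) (M : 'M[R]_3) (f : sc R) : sc R :=
  fun i j k => \sum_p \sum_q \sum_r M p i * M q j * f p q r * invmx M k r.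

(* Isomorphism of Manin triples given in dual bases: a change of basis A of
   the first subalgebra, X'_i = X_k A^k_i, X~'^j = (A^-1)^j_k X~^k. *)
Definition manin_iso (R : comUnitRingType) (f1 ft1 f2 ft2 : sc R) : Prop :=
  exists A : 'M[R]_3, A \in unitmx /\
    sc_eq (chg A f1) f2 /\ sc_eq (chg (invmx A)^T ft1) ft2.

Definition lie_iso (R : comUnitRingType) (f1 f2 : sc R) : Prop :=
  exists A : 'M[R]_3, A \in unitmx /\ sc_eq (chg A f1) f2.

Definition vec3 (R : ringType) (x y z : R) : 'I_3 -> R :=
  fun k => if val k == 0%N then x else if val k == 1%N then y else z.

Definition mk_sc (R : ringType) (v12 v23 v31 : 'I_3 -> R) : sc R :=
  fun i j k =>
    let i' := val i in let j' := val j in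
    if (i' == 0%N) && (j' == 1%N) then v12 k
    else if (i' == 1%N) && (j' == 0%N) then - v12 k
    else if (i' == 1%N) && (j' == 2%N) then v23 k
    else if (i' == 2%N) && (j' == 1%N) then - v23 k
    else if (i' == 2%N) && (j' == 0%N) then v31 k
    else if (i' == 0%N) && (j' == 2%N) then - v31 k
    else 0.

Section Bianchi.
Variable R : realType.
Variable a : R.

Definition bianchiVIa : sc R :=
  mk_sc (vec3 0 (- a) (-1)) (vec3 0 0 0) (vec3 0 1 a).

Definition dual_I : sc R := mk_sc (vec3 0 0 0) (vec3 0 0 0) (vec3 0 0 0).
Definition dual_II : sc R := mk_sc (vec3 0 0 0) (vec3 1 0 0) (vec3 0 0 0).
Definition dual_VI_i (b : R) : sc R :=
  mk_sc (vec3 0 (- (b / a)) (- b)) (vec3 0 0 0) (vec3 0 b (b / a)).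
Definition dual_VI_ii : sc R :=
  mk_sc (vec3 1 0 0) (vec3 0 ((a + 1) / (a - 1)) ((a + 1) / (a - 1)))
        (vec3 1 0 0).
Definition dual_VI_iii : sc R :=
  mk_sc (vec3 1 0 0) (vec3 0 (- ((a - 1) / (a + 1))) ((a - 1) / (a + 1)))
        (vec3 (-1) 0 0).

Definition in_dual_list (ft : sc R) : Prop :=
  sc_eq ft dual_I \/ sc_eq ft dual_II \/
  (exists b : R, b != 0 /\ sc_eq ft (dual_VI_i b)) \/
  sc_eq ft dual_VI_ii \/ sc_eq ft dual_VI_iii.
End Bianchi.

From mathcomp Require Import all_boot all_order all_algebra.
From mathcomp Require Import reals ring lra.
Import Order.TTheory GRing.Theory Num.Theory.
Local Open Scope ring_scope.
Set Implicit Arguments. Unset Strict Implicit. Unset Printing Implicit Defensive.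

(* A change of basis of G, together with the dual change of basis of G~,
   induces an isomorphism of doubles, so the Manin conditions and the
   isomorphism relation may be computed after moving G' onto VI_a.  There the
   Manin conditions on the dual structure constants (alternation, the Jacobi
   identity of G~ and the cocycle identity linking G~ to G) leave a
   four-parameter family subject to one quadratic relation.  An automorphism of
   VI_a fixes X1 modulo [G, G] and rescales the eigenvectors X2 + X3, X2 - X3 of
   ad X1; its effect on the parameters is explicit.  A suitable choice reaches
   exactly one of the five listed shapes, and the same formulas show that
   distinct shapes are never related. *)

Definition o0 : 'I_3 := @Ordinal 3 0 isT.
Definition o1 : 'I_3 := @Ordinal 3 1 isT.
Definition o2 : 'I_3 := @Ordinal 3 2 isT.

Lemma ord3_ind (P : 'I_3 -> Prop) : P o0 -> P o1 -> P o2 -> forall i, P i.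
Proof.
move=> P0 P1 P2 [[|[|[|n]]] lt_n3] //.
- by rewrite (_ : Ordinal _ = o0) //; apply: val_inj.
- by rewrite (_ : Ordinal _ = o1) //; apply: val_inj.
- by rewrite (_ : Ordinal _ = o2) //; apply: val_inj.
Qed.

Lemma sum3 (V : nmodType) (F : 'I_3 -> V) : \sum_i F i = F o0 + F o1 + F o2.
Proof.
rewrite !big_ord_recr big_ord0 /= add0r.
by congr (F _ + F _ + F _); apply: val_inj.
Qed.

Lemma sum_delta (R : pzSemiRingType) n (F : 'I_n -> R) (l : 'I_n) :
  \sum_m (l == m)%:R * F m = F l.
Proof.
rewrite (bigD1 l) //= eqxx mul1r big1 ?addr0 // => m /negPf.
by rewrite eq_sym => ->; rewrite mul0r.
Qed.

Lemma sum_idmx_r (R : pzSemiRingType) n (X : 'M[R]_n) (F : 'I_n -> R) k :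
  X = 1%:M -> \sum_r F r * X k r = F k.
Proof. by move=> ->; under eq_bigr do rewrite mxE mulr_natr -mulr_natl; apply: sum_delta. Qed.

Lemma sum_idmx_l (R : pzSemiRingType) n (X : 'M[R]_n) (F : 'I_n -> R) k :
  X = 1%:M -> \sum_r X r k * F r = F k.
Proof. by move=> ->; under eq_bigr do rewrite mxE eq_sym; apply: sum_delta. Qed.

Lemma eq0_scale (F : fieldType) (c x e : F) : e = 0 -> x = c * e -> x = 0.
Proof. by move=> -> ->; rewrite mulr0. Qed.

Lemma sc_eq_refl (R : nzRingType) (f : sc R) : sc_eq f f.
Proof. by []. Qed.

Lemma sc_eq_sym (R : nzRingType) (f g : sc R) : sc_eq f g -> sc_eq g f.
Proof. by move=> fg i j k; rewrite fg. Qed.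

Lemma sc_eq_trans (R : nzRingType) (f g h : sc R) : sc_eq f g -> sc_eq g h -> sc_eq f h.
Proof. by move=> fg gh i j k; rewrite fg gh. Qed.

(** * Change of basis *)

Lemma eq_chg (R : comUnitRingType) (M : 'M[R]_3) (f g : sc R) :
  sc_eq f g -> sc_eq (chg M f) (chg M g).
Proof.
by move=> fg i j k; rewrite /chg; under eq_bigr do under eq_bigr do under eq_bigr do rewrite fg.
Qed.

Section ChangeOfBasis.
Variables (R : comUnitRingType) (M : 'M[R]_3).
Hypothesis unitM : M \in unitmx.

Lemma chg_contract (g : sc R) i j k :
  \sum_l chg M g i j l * M k l = \sum_p \sum_q M p i * M q j * g p q k.
Proof.
transitivity (\sum_p \sum_q \sum_r M p i * M q j * g p q r * (M *m invmx M) k r).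
  by rewrite /chg !(mxE, sum3); ring.
by apply: eq_bigr => p _; apply: eq_bigr => q _; rewrite sum_idmx_r ?mulmxV.
Qed.

Lemma chg_contractl (g : sc R) i j k :
  \sum_l chg M g l i j * invmx M l k = \sum_q \sum_r M q i * g k q r * invmx M j r.
Proof.
transitivity (\sum_p (M *m invmx M) p k * \sum_q \sum_r M q i * g p q r * invmx M j r).
  by rewrite /chg !(mxE, sum3); ring.
by rewrite sum_idmx_l ?mulmxV.
Qed.

Lemma chg_contractr (g : sc R) i j k :
  \sum_l chg M g i l j * invmx M l k = \sum_p \sum_r M p i * g p k r * invmx M j r.
Proof.
transitivity (\sum_p \sum_q (M *m invmx M) q k * \sum_r M p i * g p q r * invmx M j r).
  by rewrite /chg !(mxE, sum3); ring.
by apply: eq_bigr => p _; rewrite sum_idmx_l ?mulmxV.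
Qed.

Lemma chg_unique (h g : sc R) :
  (forall i j k, \sum_l h i j l * M k l = \sum_p \sum_q M p i * M q j * g p q k) ->
  sc_eq h (chg M g).
Proof.
move=> hE i j r.
transitivity (\sum_k (\sum_l h i j l * M k l) * invmx M r k).
  transitivity (\sum_l h i j l * (invmx M *m M) r l); first by rewrite sum_idmx_r ?mulVmx.
  by rewrite !(mxE, sum3); ring.
by under eq_bigr do rewrite hE; rewrite /chg !sum3; ring.
Qed.

End ChangeOfBasis.

Section ChangeOfBasisGroup.
Variable R : comUnitRingType.
Implicit Types (A B : 'M[R]_3) (f : sc R).

Lemma chg1 f : sc_eq (chg 1%:M f) f.
Proof.
move=> i j k; rewrite /chg invmx1 !(mxE, sum3).
by elim/ord3_ind: i; elim/ord3_ind: j; elim/ord3_ind: k => /=; ring.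
Qed.

Lemma invmx_mul A B : A \in unitmx -> B \in unitmx ->
  invmx (A *m B) = invmx B *m invmx A.
Proof.
move=> unitA unitB; have unitAB : A *m B \in unitmx by rewrite unitmx_mul unitA.
have VAB : invmx B *m invmx A *m (A *m B) = 1%:M.
  by rewrite !mulmxA mulmxKV // mulVmx.
by rewrite -[LHS]mul1mx -VAB -mulmxA mulmxV ?mulmx1.
Qed.

Lemma chgM A B f : A \in unitmx -> B \in unitmx ->
  sc_eq (chg B (chg A f)) (chg (A *m B) f).
Proof.
move=> unitA unitB; apply: chg_unique; first by rewrite unitmx_mul unitA.
move=> i j k.
transitivity (\sum_s A k s * \sum_l chg B (chg A f) i j l * B s l).
  by rewrite !(mxE, sum3); ring.
under eq_bigr do rewrite chg_contract //.
transitivity (\sum_p \sum_q B p i * B q j * \sum_s chg A f p q s * A k s).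
  by rewrite !sum3; ring.
under eq_bigr do under eq_bigr do rewrite chg_contract //.
by rewrite !(mxE, sum3); ring.
Qed.

End ChangeOfBasisGroup.

Lemma unitmx3_minor (F : fieldType) (M : 'M[F]_3) :
  M \in unitmx -> M o0 o1 = 0 -> M o0 o2 = 0 ->
  M o1 o1 * M o2 o2 - M o1 o2 * M o2 o1 != 0.
Proof.
move=> unitM M01 M02; have MD := mulmxV unitM; set D := invmx M in MD.
have entry i j : (M *m D) i j = (1%:M : 'M[F]_3) i j by rewrite MD.
have := entry o0 o0; have := entry o0 o1; have := entry o0 o2.
rewrite !(mxE, sum3) M01 M02 /= !mul0r !addr0 => D02 D01 D00.
have M00 : M o0 o0 != 0.
  by apply/eqP => M00; move/eqP: D00; rewrite M00 mul0r eq_sym oner_eq0.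
move/eqP: D01; move/eqP: D02; rewrite !mulf_eq0 (negPf M00) /= => /eqP D02 /eqP D01.
have := entry o1 o1; have := entry o1 o2; have := entry o2 o1; have := entry o2 o2.
rewrite !(mxE, sum3) D01 D02 /= !mulr0 !add0r => D22 D21 D12 D11.
apply/eqP => minor0.
have : (M o1 o1 * M o2 o2 - M o1 o2 * M o2 o1) * (D o1 o1 * D o2 o2 - D o1 o2 * D o2 o1)
     = (M o1 o1 * D o1 o1 + M o1 o2 * D o2 o1) * (M o2 o1 * D o1 o2 + M o2 o2 * D o2 o2)
     - (M o1 o1 * D o1 o2 + M o1 o2 * D o2 o2) * (M o2 o1 * D o1 o1 + M o2 o2 * D o2 o1).
  by ring.
rewrite minor0 D11 D12 D21 D22 mul0r mul1r mul0r subr0 => /eqP.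
by rewrite eq_sym oner_eq0.
Qed.

(** * Transport of Manin triples *)

(* For u in G and w in G~, the bracket [u, w] of the double has G-component
   crossG ft u w and G~-component crossD f u w. *)
Section BracketParts.
Variable R : comRingType.
Implicit Types (f ft g : sc R) (u v w xi eta : 'rV[R]_3).

Definition scbr g u v : 'rV[R]_3 := \row_k \sum_i \sum_j u 0 i * v 0 j * g i j k.
Definition crossG g u w : 'rV[R]_3 := \row_k \sum_i \sum_j u 0 i * w 0 j * g j k i.
Definition crossD g u w : 'rV[R]_3 := \row_k \sum_i \sum_j u 0 i * w 0 j * g k i j.

Lemma dbrE f ft u xi v eta : dbr f ft (u, xi) (v, eta) =
  (scbr f u v + crossG ft u eta - crossG ft v xi,
   scbr ft xi eta + crossD f u eta - crossD f v xi).
Proof.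
congr pair; apply/rowP => k; rewrite !mxE; congr (_ + _ - _);
  by apply: eq_bigr => i _; apply: eq_bigr => j _; rewrite [xi 0 j * _]mulrC.
Qed.

End BracketParts.

Section TransportParts.
Variables (R : comUnitRingType) (M : 'M[R]_3).
Hypothesis unitM : M \in unitmx.
Implicit Types (g : sc R) (u w : 'rV[R]_3).

Lemma scbr_chg g u w : scbr (chg M g) u w *m M^T = scbr g (u *m M^T) (w *m M^T).
Proof.
apply/rowP => k; rewrite !mxE.
transitivity (\sum_i \sum_j u 0 i * w 0 j * \sum_l chg M g i j l * M k l).
  by rewrite !(mxE, sum3); ring.
under eq_bigr do under eq_bigr do rewrite chg_contract //.
by rewrite !(mxE, sum3); ring.
Qed.

Lemma crossG_chg g u w :
  crossG (chg M g) u w *m invmx M = crossG g (u *m invmx M) (w *m M^T).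
Proof.
apply/rowP => k; rewrite !mxE.
transitivity (\sum_i \sum_j u 0 i * w 0 j * \sum_l chg M g j l i * invmx M l k).
  by rewrite !(mxE, sum3); ring.
under eq_bigr do under eq_bigr do rewrite chg_contractr //.
by rewrite !(mxE, sum3); ring.
Qed.

Lemma crossD_chg g u w :
  crossD (chg M g) u w *m invmx M = crossD g (u *m M^T) (w *m invmx M).
Proof.
apply/rowP => k; rewrite !mxE.
transitivity (\sum_i \sum_j u 0 i * w 0 j * \sum_l chg M g l i j * invmx M l k).
  by rewrite !(mxE, sum3); ring.
under eq_bigr do under eq_bigr do rewrite chg_contractl //.
by rewrite !(mxE, sum3); ring.
Qed.

End TransportParts.

Section ManinChangeOfBasis.
Variables (R : comUnitRingType) (A : 'M[R]_3).
Hypothesis unitA : A \in unitmx.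

(* The coordinate map of the isomorphism of doubles induced by the change of
   basis X'_i = X_k A^k_i, X~'^j = (A^-1)^j_k X~^k. *)
Definition dmap (x : dbl R) : dbl R := (x.1 *m A^T, x.2 *m invmx A).

Lemma dmapD x y : dmap (dadd x y) = dadd (dmap x) (dmap y).
Proof. by rewrite /dmap /dadd /= !mulmxDl. Qed.

Lemma dmap_eq0 x : dmap x = (0, 0) -> x = (0, 0).
Proof.
case: x => u xi [/= u0 xi0]; congr pair.
- by rewrite -[u](@mulmxK _ _ _ A^T) ?unitmx_tr // u0 mul0mx.
- by rewrite -[xi](@mulmxK _ _ _ (invmx A)) ?unitmx_inv // xi0 mul0mx.
Qed.

Lemma dbr_chg (f ft : sc R) x y :
  dmap (dbr (chg A f) (chg (invmx A)^T ft) x y) = dbr f ft (dmap x) (dmap y).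
Proof.
have unitB : (invmx A)^T \in unitmx by rewrite unitmx_tr unitmx_inv.
have invB : invmx (invmx A)^T = A^T by rewrite trmx_inv invmxK.
have trB : ((invmx A)^T)^T = invmx A by rewrite trmxK.
have crossG_B u w : crossG (chg (invmx A)^T ft) u w *m A^T =
                    crossG ft (u *m A^T) (w *m invmx A).
  by have := crossG_chg unitB ft u w; rewrite invB trB.
have scbr_B u w : scbr (chg (invmx A)^T ft) u w *m invmx A =
                  scbr ft (u *m invmx A) (w *m invmx A).
  by have := scbr_chg unitB ft u w; rewrite trB.
case: x => u xi; case: y => v eta.
rewrite /dmap !dbrE /=; congr pair; rewrite !(mulmxDl, mulNmx).
- by rewrite scbr_chg // !crossG_B.
- by rewrite scbr_B !crossD_chg.
Qed.

Lemma manin_chg (f ft : sc R) :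
  is_manin f ft -> is_manin (chg A f) (chg (invmx A)^T ft).
Proof.
case=> alt jac; split=> [x | x y z]; apply: dmap_eq0.
- by rewrite dbr_chg alt.
- by rewrite !dmapD !dbr_chg jac.
Qed.

End ManinChangeOfBasis.

Lemma eq_manin (R : comRingType) (f f' ft ft' : sc R) :
  sc_eq f f' -> sc_eq ft ft' -> is_manin f ft -> is_manin f' ft'.
Proof.
move=> ff' ftft'.
have dbr_eq x y : dbr f' ft' x y = dbr f ft x y.
  congr pair; apply/rowP => k; rewrite !mxE; congr (_ + _ - _);
    by apply: eq_bigr => i _; apply: eq_bigr => j _; rewrite ?ff' ?ftft'.
by case=> alt jac; split=> [x | x y z]; rewrite !dbr_eq.
Qed.

Section ManinIsomorphism.
Variable R : comUnitRingType.
Implicit Types (f ft g gt h ht : sc R).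

Lemma eq_manin_iso f ft g gt : sc_eq f g -> sc_eq ft gt -> manin_iso f ft g gt.
Proof.
move=> fg ftgt; exists 1%:M; split; first exact: unitmx1.
by rewrite invmx1 trmx1; split; apply: sc_eq_trans (chg1 _) _.
Qed.

Lemma manin_iso_manin f ft g gt : manin_iso f ft g gt -> is_manin f ft -> is_manin g gt.
Proof. by case=> A [unitA [fg ftgt]] /(manin_chg unitA); apply: eq_manin. Qed.

Lemma manin_iso_trans f ft g gt h ht :
  manin_iso f ft g gt -> manin_iso g gt h ht -> manin_iso f ft h ht.
Proof.
case=> A [unitA [fg ftgt]] [B [unitB [gh gtht]]].
exists (A *m B); split; first by rewrite unitmx_mul unitA.
split.
- apply: sc_eq_trans (sc_eq_sym (chgM f unitA unitB)) _.
  exact: sc_eq_trans (eq_chg B fg) gh.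
- rewrite invmx_mul // trmx_mul.
  apply: sc_eq_trans (sc_eq_sym (chgM ft _ _)) _; rewrite ?unitmx_tr ?unitmx_inv //.
  exact: sc_eq_trans (eq_chg _ ftgt) gtht.
Qed.

Lemma manin_iso_sym f ft g gt : manin_iso f ft g gt -> manin_iso g gt f ft.
Proof.
case=> A [unitA [fg ftgt]]; exists (invmx A); split; first by rewrite unitmx_inv.
split.
- apply: sc_eq_trans (eq_chg _ (sc_eq_sym fg)) _.
  by apply: sc_eq_trans (chgM f unitA _) _; rewrite ?unitmx_inv // mulmxV //; apply: chg1.
- rewrite invmxK; apply: sc_eq_trans (eq_chg _ (sc_eq_sym ftgt)) _.
  apply: sc_eq_trans (chgM ft _ _) _; rewrite ?unitmx_tr ?unitmx_inv //.
  by rewrite -trmx_mul mulmxV // trmx1; apply: chg1.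
Qed.

End ManinIsomorphism.

(** * The Manin conditions in coordinates *)

Section BasisBrackets.
Variables (R : comRingType) (f ft : sc R).

Lemma dbr_G i y : dbr f ft (delta_mx 0 i, 0) y =
  (\row_k (\sum_m y.1 0 m * f i m k + \sum_m y.2 0 m * ft m k i),
   \row_k \sum_m y.2 0 m * f k i m).
Proof.
congr pair; apply/rowP => k; rewrite /dbr !(mxE, sum3);
  by elim/ord3_ind: i => /=; ring.
Qed.

Lemma dbr_D l y : dbr f ft (0, delta_mx 0 l) y =
  (\row_k - \sum_m y.1 0 m * ft l k m,
   \row_k (\sum_m y.2 0 m * ft l m k - \sum_m y.1 0 m * f k m l)).
Proof.
congr pair; apply/rowP => k; rewrite /dbr !(mxE, sum3);
  by elim/ord3_ind: l => /=; ring.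
Qed.

Lemma dbr_GG i j : dbr f ft (delta_mx 0 i, 0) (delta_mx 0 j, 0) = (\row_k f i j k, 0).
Proof.
rewrite dbr_G; congr pair; apply/rowP => k; rewrite !(mxE, sum3);
  by elim/ord3_ind: j => /=; ring.
Qed.

Lemma dbr_GD i l : dbr f ft (delta_mx 0 i, 0) (0, delta_mx 0 l) =
  (\row_k ft l k i, \row_k f k i l).
Proof.
rewrite dbr_G; congr pair; apply/rowP => k; rewrite !(mxE, sum3);
  by elim/ord3_ind: l => /=; ring.
Qed.

Lemma dbr_DG l i : dbr f ft (0, delta_mx 0 l) (delta_mx 0 i, 0) =
  (\row_k - ft l k i, \row_k - f k i l).
Proof.
rewrite dbr_D; congr pair; apply/rowP => k; rewrite !(mxE, sum3);
  by elim/ord3_ind: i => /=; ring.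
Qed.

Lemma dbr_DD i j : dbr f ft (0, delta_mx 0 i) (0, delta_mx 0 j) = (0, \row_k ft i j k).
Proof.
rewrite dbr_D; congr pair; apply/rowP => k; rewrite !(mxE, sum3);
  by elim/ord3_ind: j => /=; ring.
Qed.

End BasisBrackets.

Definition alternating (R : nzRingType) (g : sc R) :=
  (forall i k, g i i k = 0) /\ (forall i j k, g i j k = - g j i k).

Lemma alternating_mk_sc (R : nzRingType) (g : sc R) :
  alternating g -> sc_eq g (mk_sc (g o0 o1) (g o1 o2) (g o2 o0)).
Proof.
case=> diag anti i j k; rewrite /mk_sc.
by elim/ord3_ind: i; elim/ord3_ind: j; rewrite /= ?diag // anti.
Qed.

Section ManinConditions.
Variables (R : comRingType) (f ft : sc R).
Hypothesis manin_fft : is_manin f ft.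

Lemma manin_dual_alternating : alternating ft.
Proof.
have diag i k : ft i i k = 0.
  have := congr1 (fun x : dbl R => x.2 0 k) (manin_fft.1 (0, delta_mx 0 i)).
  by rewrite dbr_DD /= !mxE.
split=> // i j k; apply/eqP; rewrite -subr_eq0 opprK; apply/eqP.
have := congr1 (fun x : dbl R => x.2 0 k)
  (manin_fft.1 (0, delta_mx 0 i + delta_mx 0 j)).
rewrite /dbr /= !(mxE, sum3).
by elim/ord3_ind: i; elim/ord3_ind: j => /=; rewrite !diag => <-; ring.
Qed.

Lemma manin_dual_jacobi i j l k :
  \sum_m (ft j l m * ft i m k + ft l i m * ft j m k + ft i j m * ft l m k) = 0.
Proof.
have := congr1 (fun x : dbl R => x.2 0 k)
  (manin_fft.2 (0, delta_mx 0 i) (0, delta_mx 0 j) (0, delta_mx 0 l)).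
rewrite !dbr_DD !dbr_D /dadd /= !(mxE, sum3) => <-.
ring.
Qed.

Lemma manin_cocycle i j k l :
  \sum_m (f i m k * ft l m j - f j m k * ft l m i + f m j l * ft m k i
          - f m i l * ft m k j - f i j m * ft l k m) = 0.
Proof.
have := congr1 (fun x : dbl R => x.1 0 k)
  (manin_fft.2 (delta_mx 0 i, 0) (delta_mx 0 j, 0) (0, delta_mx 0 l)).
rewrite dbr_GD dbr_DG dbr_GG !dbr_G dbr_D /dadd /= !(mxE, sum3) => <-.
ring.
Qed.

End ManinConditions.

(** * Manin triples over Bianchi VI_a *)

Section BianchiVIa.
Variables (R : realType) (a : R).
Hypotheses (a_neq0 : a != 0) (a_neq1 : a - 1 != 0) (a_neqN1 : a + 1 != 0).

Lemma sqr_a_neq1 : a ^+ 2 - 1 != 0.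
Proof. by rewrite (_ : a ^+ 2 - 1 = (a - 1) * (a + 1)) ?mulf_neq0 //; ring. Qed.

(* Parametrised by p and q rather than by the X~1-components p + q and p - q,
   because automorphisms of VI_a rescale p and q independently. *)
Definition VIa_dual (b p q c : R) : sc R :=
  mk_sc (vec3 (p + q) b (a * b))
        (vec3 c ((a + 1) / (a - 1) * p - (a - 1) / (a + 1) * q)
                ((a + 1) / (a - 1) * p + (a - 1) / (a + 1) * q))
        (vec3 (p - q) (- (a * b)) (- b)).

Lemma manin_VIa_dual (g : sc R) : is_manin (bianchiVIa a) g ->
  exists b p q c, sc_eq g (VIa_dual b p q c) /\ 4 * a * p * q = (a ^+ 2 - 1) * b * c.
Proof.
move=> manin_g; have := alternating_mk_sc (manin_dual_alternating manin_g).
move: (g o0 o1) (g o1 o2) (g o2 o0) => v12 v23 v31 gE.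
have := manin_cocycle manin_g o0 o1 o1 o0.
rewrite sum3 !gE /bianchiVIa /mk_sc /vec3 /= => E1.
have := manin_cocycle manin_g o0 o1 o2 o0.
rewrite sum3 !gE /bianchiVIa /mk_sc /vec3 /= => E2.
have := manin_cocycle manin_g o1 o2 o2 o1.
rewrite sum3 !gE /bianchiVIa /mk_sc /vec3 /= => E3.
have := manin_cocycle manin_g o0 o1 o2 o1.
rewrite sum3 !gE /bianchiVIa /mk_sc /vec3 /= => E4.
have := manin_cocycle manin_g o0 o2 o2 o1.
rewrite sum3 !gE /bianchiVIa /mk_sc /vec3 /= => E5.
have := manin_dual_jacobi manin_g o0 o1 o2 o0.
rewrite sum3 !gE /mk_sc /vec3 /= => E6.
have [p [q [v12_0 v31_0]]] : exists p q, v12 o0 = p + q /\ v31 o0 = p - q.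
  by exists ((v12 o0 + v31 o0) / 2), ((v12 o0 - v31 o0) / 2); split; field.
have v31_2 : v31 o2 = - v12 o1 by lra.
have v31_1 : v31 o1 = - v12 o2 by lra.
rewrite v31_1 v31_2 in E3.
have v12_2 : v12 o2 = a * v12 o1 by lra.
rewrite v12_2 in v31_1.
have v23_2 : v23 o2 = a * v23 o1 - v12 o0 - a * v31 o0 by lra.
rewrite v23_2 v12_0 v31_0 in E5.
have v23_1 : v23 o1 = (a + 1) / (a - 1) * p - (a - 1) / (a + 1) * q.
  apply: (mulfI sqr_a_neq1).
  rewrite (_ : _ * v23 o1 = 2 * a * (p + q) + (1 + a ^+ 2) * (p - q)); last by lra.
  by field; rewrite a_neq1 a_neqN1.
rewrite v23_1 v12_0 v31_0 in v23_2.
exists (v12 o1), p, q, (v23 o0); split.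
  move=> i j k; rewrite gE /VIa_dual /mk_sc /vec3.
  by elim/ord3_ind: i; elim/ord3_ind: j; elim/ord3_ind: k;
    rewrite /= ?v12_0 ?v12_2 ?v31_0 ?v31_1 ?v31_2 ?v23_1 ?v23_2 //;
    field; rewrite ?(a_neq1, a_neqN1).
rewrite v23_2 v23_1 v12_0 v31_0 v31_2 in E6.
apply/eqP; rewrite -subr_eq0; apply/eqP.
by apply: (eq0_scale (c := (a ^+ 2 - 1) / 2) E6); field; rewrite ?(a_neq1, a_neqN1).
Qed.

(* The automorphism X1 |-> X1 + x (X2 + X3) + y (X2 - X3),
   X2 + X3 |-> l (X2 + X3), X2 - X3 |-> m (X2 - X3): since
   [X1, X2 + X3] = -(a + 1) (X2 + X3) and [X1, X2 - X3] = (1 - a) (X2 - X3),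
   these are all the automorphisms of VI_a. *)
Definition autm (x y l m : R) : 'M[R]_3 :=
  \matrix_(i, j) vec3 (vec3 1 0 0 j) (vec3 (x + y) ((l + m) / 2) ((l - m) / 2) j)
                      (vec3 (x - y) ((l - m) / 2) ((l + m) / 2) j) i.

Section FixedAutomorphism.
Variables (x y l m : R).
Hypotheses (l_neq0 : l != 0) (m_neq0 : m != 0).

Lemma autm_mulV : autm x y l m *m autm (- x / l) (- y / m) l^-1 m^-1 = 1%:M.
Proof.
apply/matrixP => i j; rewrite !mxE sum3 !mxE /vec3.
by elim/ord3_ind: i; elim/ord3_ind: j => /=; field; rewrite ?l_neq0 ?m_neq0.
Qed.

Lemma autm_unit : autm x y l m \in unitmx.
Proof. by case: (mulmx1_unit autm_mulV). Qed.

Lemma invmx_autm : invmx (autm x y l m) = autm (- x / l) (- y / m) l^-1 m^-1.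
Proof. by rewrite -[LHS]mulmx1 -autm_mulV mulmxA mulVmx ?autm_unit // mul1mx. Qed.

Lemma chg_autm_VIa : sc_eq (chg (autm x y l m) (bianchiVIa a)) (bianchiVIa a).
Proof.
move=> i j k; rewrite /chg invmx_autm !(mxE, sum3) /bianchiVIa /mk_sc /vec3.
by elim/ord3_ind: i; elim/ord3_ind: j; elim/ord3_ind: k => /=;
  field; rewrite ?l_neq0 ?m_neq0.
Qed.

Lemma chg_autm_VIa_dual b p q c p' q' c' :
  p' = (p - (a - 1) * b * y) / m -> q' = (q + (a + 1) * b * x) / l ->
  c' = (c + 4 * a * (p * x / (a - 1) - q * y / (a + 1) - b * x * y)) / (l * m) ->
  sc_eq (chg (invmx (autm x y l m))^T (VIa_dual b p q c)) (VIa_dual b p' q' c').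
Proof.
move=> -> -> -> i j k.
rewrite /chg -trmx_inv invmxK invmx_autm !(mxE, sum3) /VIa_dual /mk_sc /vec3.
by elim/ord3_ind: i; elim/ord3_ind: j; elim/ord3_ind: k => /=;
  field; rewrite ?(a_neq1, a_neqN1, l_neq0, m_neq0).
Qed.

Lemma manin_iso_autm b p q c p' q' c' :
  p' = (p - (a - 1) * b * y) / m -> q' = (q + (a + 1) * b * x) / l ->
  c' = (c + 4 * a * (p * x / (a - 1) - q * y / (a + 1) - b * x * y)) / (l * m) ->
  manin_iso (bianchiVIa a) (VIa_dual b p q c) (bianchiVIa a) (VIa_dual b p' q' c').
Proof.
move=> p'E q'E c'E; exists (autm x y l m).
by split; [exact: autm_unit | split; [exact: chg_autm_VIa | exact: chg_autm_VIa_dual]].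
Qed.

End FixedAutomorphism.

Definition VIa_aut (M : 'M[R]_3) :=
  M \in unitmx /\ sc_eq (chg M (bianchiVIa a)) (bianchiVIa a).

Section AutomorphismStructure.
Variable M : 'M[R]_3.
Hypothesis autM : VIa_aut M.

Lemma VIa_aut_hom i j k :
  \sum_l bianchiVIa a i j l * M k l = \sum_p \sum_q M p i * M q j * bianchiVIa a p q k.
Proof. by rewrite -chg_contract; [apply: eq_bigr => l _; rewrite autM.2 | case: autM]. Qed.

Lemma VIa_aut_row0 : M o0 o1 = 0 /\ M o0 o2 = 0.
Proof.
have := VIa_aut_hom o0 o1 o0; have := VIa_aut_hom o2 o0 o0.
rewrite !sum3 /bianchiVIa /mk_sc /vec3 /= => E2 E1.
have M02 : M o0 o2 = - a * M o0 o1 by lra.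
rewrite M02 in E2.
have : (a ^+ 2 - 1) * M o0 o1 = 0 by lra.
move/eqP; rewrite mulf_eq0 (negPf sqr_a_neq1) /= => /eqP M01.
by rewrite M02 M01 mulr0.
Qed.

(* M restricted to span(X2, X3) intertwines ad X1 with M00 * ad X1; in the
   eigenbasis X2 + X3, X2 - X3 this reads: *)
Lemma VIa_aut_eigen :
  [/\ (M o0 o0 - 1) * (a + 1) * (M o1 o1 + M o1 o2 + M o2 o1 + M o2 o2) = 0,
      (M o0 o0 * (a + 1) - (a - 1)) * (M o1 o1 - M o1 o2 + M o2 o1 - M o2 o2) = 0,
      (M o0 o0 * (a - 1) - (a + 1)) * (M o1 o1 + M o1 o2 - M o2 o1 - M o2 o2) = 0 &
      (M o0 o0 - 1) * (a - 1) * (M o1 o1 - M o1 o2 - M o2 o1 + M o2 o2) = 0].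
Proof.
have [M01 M02] := VIa_aut_row0.
have := VIa_aut_hom o0 o1 o1; have := VIa_aut_hom o0 o1 o2.
have := VIa_aut_hom o0 o2 o1; have := VIa_aut_hom o0 o2 o2.
rewrite !sum3 /bianchiVIa /mk_sc /vec3 /= M01 M02 => E22 E21 E12 E11.
split; lra.
Qed.

Lemma VIa_aut_diag : [/\ M o0 o0 = 1, M o1 o1 = M o2 o2 & M o1 o2 = M o2 o1].
Proof.
have [M01 M02] := VIa_aut_row0.
have minor := unitmx3_minor autM.1 M01 M02.
have [e11 e12 e21 e22] := VIa_aut_eigen.
have M00 : M o0 o0 = 1.
  apply/eqP; apply: contraT => M00_neq1.
  have M00_1 : M o0 o0 - 1 != 0 by rewrite subr_eq0.
  move/eqP: e11; move/eqP: e22.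
  rewrite !mulf_eq0 (negPf M00_1) (negPf a_neq1) (negPf a_neqN1) /= => /eqP s4 /eqP s1.
  have : (M o1 o1 - M o1 o2 + M o2 o1 - M o2 o2) * (M o1 o1 + M o1 o2 - M o2 o1 - M o2 o2) != 0.
    by apply: contra minor => /eqP s23; apply/eqP; nra.
  rewrite mulf_eq0 negb_or => /andP[s2 s3].
  move/eqP: e12; move/eqP: e21; rewrite !mulf_eq0 (negPf s2) (negPf s3) !orbF.
  move=> /eqP e21 /eqP e12.
  have M00_N1 : M o0 o0 = -1 by lra.
  rewrite M00_N1 in e12.
  have a0 : a = 0 by lra.
  by move: a_neq0; rewrite a0 eqxx.
by rewrite M00 in e12 e21; split=> //; lra.
Qed.

Lemma VIa_autE : exists x y l m, [/\ l != 0, m != 0 & M = autm x y l m].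
Proof.
have [M01 M02] := VIa_aut_row0; have [M00 M11 M12] := VIa_aut_diag.
have := unitmx3_minor autM.1 M01 M02.
rewrite M11 M12 (_ : _ - _ = (M o2 o2 + M o2 o1) * (M o2 o2 - M o2 o1)); last by ring.
rewrite mulf_eq0 negb_or => /andP[l_neq0 m_neq0].
exists ((M o1 o0 + M o2 o0) / 2), ((M o1 o0 - M o2 o0) / 2), (M o2 o2 + M o2 o1),
  (M o2 o2 - M o2 o1); split => //; apply/matrixP => i j; rewrite mxE /vec3.
by elim/ord3_ind: i; elim/ord3_ind: j; rewrite /= ?M00 ?M01 ?M02 ?M11 ?M12 //; field.
Qed.

End AutomorphismStructure.

(** * Normal forms *)

Definition VIa_normal (b p q c : R) : Prop :=
  [/\ b = 0, p = 0, q = 0 & c = 0] \/ [/\ b = 0, p = 0, q = 0 & c = 1] \/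
  [/\ b != 0, p = 0, q = 0 & c = 0] \/ [/\ b = 0, p = 1, q = 0 & c = 0] \/
  [/\ b = 0, p = 0, q = 1 & c = 0].

Lemma VIa_dual_list_members :
  [/\ sc_eq (VIa_dual 0 0 0 0) (dual_I R), sc_eq (VIa_dual 0 0 0 1) (dual_II R),
      forall b, sc_eq (VIa_dual (- (b / a)) 0 0 0) (dual_VI_i a b),
      sc_eq (VIa_dual 0 1 0 0) (dual_VI_ii a) & sc_eq (VIa_dual 0 0 1 0) (dual_VI_iii a)].
Proof.
split=> [||b||] i j k;
  rewrite /VIa_dual /dual_I /dual_II /dual_VI_i /dual_VI_ii /dual_VI_iii /mk_sc /vec3;
  by elim/ord3_ind: i; elim/ord3_ind: j; elim/ord3_ind: k => /=;
    field; rewrite ?(a_neq0, a_neq1, a_neqN1).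
Qed.

Lemma VIa_dual_listP T :
  in_dual_list a T <-> exists b p q c, VIa_normal b p q c /\ sc_eq T (VIa_dual b p q c).
Proof.
have [eI eII ei eii eiii] := VIa_dual_list_members.
have ei' b : sc_eq (VIa_dual b 0 0 0) (dual_VI_i a (- (a * b))).
  by rewrite -[X in VIa_dual X](_ : - (- (a * b) / a) = b) //; field.
split.
- case=> [TE|[TE|[[b [b_neq0 TE]]|[TE|TE]]]].
  + exists 0, 0, 0, 0; split; first by left.
    exact: sc_eq_trans TE (sc_eq_sym eI).
  + exists 0, 0, 0, 1; split; first by right; left.
    exact: sc_eq_trans TE (sc_eq_sym eII).
  + exists (- (b / a)), 0, 0, 0; split.
      by right; right; left; rewrite oppr_eq0 mulf_neq0 ?invr_eq0.
    exact: sc_eq_trans TE (sc_eq_sym (ei b)).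
  + exists 0, 1, 0, 0; split; first by right; right; right; left.
    exact: sc_eq_trans TE (sc_eq_sym eii).
  + exists 0, 0, 1, 0; split; first by right; right; right; right.
    exact: sc_eq_trans TE (sc_eq_sym eiii).
- case=> b [p [q [c [N]]]].
  case: N => [[-> -> -> ->]|[[-> -> -> ->]|[[b_neq0 -> -> ->]|[[-> -> -> ->]|[-> -> -> ->]]]]] TE.
  + by left; apply: sc_eq_trans TE eI.
  + by right; left; apply: sc_eq_trans TE eII.
  + right; right; left; exists (- (a * b)); split; first by rewrite oppr_eq0 mulf_neq0.
    exact: sc_eq_trans TE (ei' b).
  + by right; right; right; left; apply: sc_eq_trans TE eii.
  + by right; right; right; right; apply: sc_eq_trans TE eiii.
Qed.

Lemma VIa_dual_normalize b p q c : 4 * a * p * q = (a ^+ 2 - 1) * b * c ->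
  exists b' p' q' c', VIa_normal b' p' q' c' /\
    manin_iso (bianchiVIa a) (VIa_dual b p q c) (bianchiVIa a) (VIa_dual b' p' q' c').
Proof.
have one_neq0 := oner_neq0 R.
move=> J; have [b0|b_neq0] := eqVneq b 0; last first.
  have cE : c = 4 * a * p * q / ((a ^+ 2 - 1) * b).
    by rewrite J; field; rewrite sqr_a_neq1 b_neq0.
  exists b, 0, 0, 0; split; first by right; right; left.
  by apply: (manin_iso_autm (x := - q / ((a + 1) * b)) (y := p / ((a - 1) * b))
               one_neq0 one_neq0);
    rewrite ?cE; field; rewrite ?(a_neq0, a_neq1, a_neqN1, b_neq0, sqr_a_neq1).
rewrite b0 !mulr0 mul0r in J *.
have [p0|p_neq0] := eqVneq p 0; last first.
  have q0 : q = 0.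
    by move/eqP: J; rewrite !mulf_eq0 pnatr_eq0 (negPf a_neq0) (negPf p_neq0) /= => /eqP.
  exists 0, 1, 0, 0; split; first by right; right; right; left.
  by apply: (manin_iso_autm (x := - c * (a - 1) / (4 * a * p)) (y := 0) one_neq0 p_neq0);
    rewrite ?q0; field; rewrite ?(a_neq0, a_neq1, a_neqN1, p_neq0).
rewrite p0.
have [q0|q_neq0] := eqVneq q 0; last first.
  exists 0, 0, 1, 0; split; first by right; right; right; right.
  by apply: (manin_iso_autm (x := 0) (y := c * (a + 1) / (4 * a * q)) q_neq0 one_neq0);
    field; rewrite ?(a_neq0, a_neq1, a_neqN1, q_neq0).
rewrite q0.
have [c0|c_neq0] := eqVneq c 0.
  exists 0, 0, 0, 0; split; first by left.
  by apply: (manin_iso_autm (x := 0) (y := 0) one_neq0 one_neq0);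
    rewrite ?c0; field; rewrite ?(a_neq1, a_neqN1).
exists 0, 0, 0, 1; split; first by right; left.
by apply: (manin_iso_autm (x := 0) (y := 0) c_neq0 one_neq0);
  field; rewrite ?(a_neq1, a_neqN1, c_neq0).
Qed.

Lemma VIa_normal_neq0 b p q c : VIa_normal b p q c -> b != 0 -> [/\ p = 0, q = 0 & c = 0].
Proof. by case=> [[->]|[[->]|[[_ -> -> ->]|[[->]|[->]]]]]; rewrite ?eqxx. Qed.

Lemma VIa_normal_0 p q c : VIa_normal 0 p q c ->
  [/\ p = 0 \/ p = 1, q = 0 \/ q = 1, c = 0 \/ c = 1 & (p != 0) || (q != 0) -> c = 0].
Proof.
case=> [[_ -> -> ->]|[[_ -> -> ->]|[[/eqP/(_ erefl)[]]|[[_ -> -> ->]|[_ -> -> ->]]]]];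
  by split; rewrite ?eqxx //; by [left|right].
Qed.

Lemma VIa_dual_inj b p q c b' p' q' c' :
  sc_eq (VIa_dual b p q c) (VIa_dual b' p' q' c') -> [/\ b = b', p = p', q = q' & c = c'].
Proof.
move=> E; have := E o0 o1 o1; have := E o1 o2 o0; have := E o0 o1 o0; have := E o2 o0 o0.
by rewrite /VIa_dual /mk_sc /vec3 /= => *; split; lra.
Qed.

Lemma eq01 (u v : R) : u = 0 \/ u = 1 -> v = 0 \/ v = 1 -> (u == 0) = (v == 0) -> u = v.
Proof. by do 2![case=> ->]; rewrite ?eqxx ?oner_eq0. Qed.

Lemma VIa_normal_uniq b p q c b' p' q' c' :
  VIa_normal b p q c -> VIa_normal b' p' q' c' ->
  manin_iso (bianchiVIa a) (VIa_dual b p q c) (bianchiVIa a) (VIa_dual b' p' q' c') ->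
  [/\ b' = b, p' = p, q' = q & c' = c].
Proof.
move=> N N' [C [unitC [autC dualC]]].
have [x [y [l [m [l_neq0 m_neq0 CE]]]]] := VIa_autE (conj unitC autC).
rewrite CE in dualC.
have [b'b p'E q'E c'E] := VIa_dual_inj (sc_eq_trans (sc_eq_sym dualC)
  (chg_autm_VIa_dual l_neq0 m_neq0 erefl erefl erefl)).
subst b'.
have [b0|b_neq0] := eqVneq b 0; last first.
  by have [-> -> ->] := VIa_normal_neq0 N b_neq0; have [-> -> ->] := VIa_normal_neq0 N' b_neq0.
rewrite b0 in N N' p'E q'E c'E *; rewrite !(mulr0, mul0r, subr0, addr0) in p'E q'E c'E.
have [p01 q01 c01 pq_c] := VIa_normal_0 N; have [p01' q01' c01' pq_c'] := VIa_normal_0 N'.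
have p'p : p' = p by apply: eq01 => //; rewrite p'E mulf_eq0 invr_eq0 (negPf m_neq0) orbF.
have q'q : q' = q by apply: eq01 => //; rewrite q'E mulf_eq0 invr_eq0 (negPf l_neq0) orbF.
split=> //; have [pq|] := boolP ((p != 0) || (q != 0)).
  by rewrite pq_c // pq_c' // p'p q'q.
rewrite negb_or !negbK => /andP[/eqP p0 /eqP q0].
rewrite p0 q0 !(mul0r, mulr0, subr0, addr0) in c'E.
apply: eq01 => //; rewrite c'E mulf_eq0 invr_eq0 mulf_eq0.
by rewrite (negPf l_neq0) (negPf m_neq0) !orbF.
Qed.

Lemma VIa_dual_classify g : is_manin (bianchiVIa a) g ->
  exists T, in_dual_list a T /\ manin_iso (bianchiVIa a) g (bianchiVIa a) T.
Proof.
move=> manin_g; have [b [p [q [c [gE J]]]]] := manin_VIa_dual manin_g.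
have [b' [p' [q' [c' [N iso]]]]] := VIa_dual_normalize J.
exists (VIa_dual b' p' q' c'); split; first by apply/VIa_dual_listP; exists b', p', q', c'.
exact: manin_iso_trans (eq_manin_iso (sc_eq_refl _) gE) iso.
Qed.

Lemma VIa_dual_list_uniq T T' : in_dual_list a T -> in_dual_list a T' ->
  manin_iso (bianchiVIa a) T (bianchiVIa a) T' -> sc_eq T' T.
Proof.
move=> /VIa_dual_listP[b [p [q [c [N TE]]]]] /VIa_dual_listP[b' [p' [q' [c' [N' T'E]]]]] iso.
have := manin_iso_trans (eq_manin_iso (sc_eq_refl _) (sc_eq_sym TE))
          (manin_iso_trans iso (eq_manin_iso (sc_eq_refl _) T'E)).
case/(VIa_normal_uniq N N') => b'b p'p q'q c'c; rewrite b'b p'p q'q c'c in T'E.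
exact: sc_eq_trans T'E (sc_eq_sym TE).
Qed.

End BianchiVIa.

Theorem mainTheorem5 (R : realType) (a : R) (ha0 : 0 < a) (ha1 : a != 1)
    (f' ft' : sc R) :
  is_manin f' ft' -> lie_iso f' (bianchiVIa a) ->
  exists ft : sc R,
    in_dual_list a ft /\ manin_iso f' ft' (bianchiVIa a) ft /\
    (forall ft2 : sc R, in_dual_list a ft2 ->
       manin_iso f' ft' (bianchiVIa a) ft2 -> sc_eq ft2 ft).
Proof.
move=> manin' [A [unitA chgA]].
have a_neq0 : a != 0 by rewrite gt_eqF.
have a_neq1 : a - 1 != 0 by rewrite subr_eq0.
have a_neqN1 : a + 1 != 0 by rewrite gt_eqF // addr_gt0.
have isoA : manin_iso f' ft' (bianchiVIa a) (chg (invmx A)^T ft').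
  by exists A; split=> //; split.
have [T [listT isoT]] :=
  VIa_dual_classify a_neq0 a_neq1 a_neqN1 (manin_iso_manin isoA manin').
have iso' := manin_iso_trans isoA isoT.
exists T; split=> //; split=> // ft2 list2 iso2.
exact: VIa_dual_list_uniq listT list2 (manin_iso_trans (manin_iso_sym iso') iso2).
Qed.
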